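(* Let $U_n\subset C^n([a,b],\mathbb{K})$ ($\mathbb{K}=\mathbb{R}$ or $\mathbb{C}$, $a<b$) be a subspace of dimension $n+1$ with a Bernstein basis $p_{n,0},\dots,p_{n,n}$ for $\{a,b\}$. Let $f_0\in U_n$ be strictly positive and suppose $D_{f_0}U_n$ has a Bernstein basis $q_{n-1,0},\dots,q_{n-1,n-1}$ for $\{a,b\}$. Define the (non-zero) numbers $$c_k=\frac{p_{n,k}^{(k)}(a)}{f_0(a)\,q_{n-1,k-1}^{(k-1)}(a)}\ (k=1,\dots,n),\qquad d_k=\frac{p_{n,k}^{(n-k)}(b)}{f_0(b)\,q_{n-1,k}^{(n-1-k)}(b)}\ (k=0,\dots,n-1).$$ Then $$f_0(x)=\frac{f_0(a)}{p_{n,0}(a)}p_{n,0}(x)+\sum_{k=1}^n(-1)^k\frac{d_0\cdots d_{k-1}}{c_1\cdots c_k}\,\frac{f_0(a)}{p_{n,0}(a)}\,p_{n,k}(x).$$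
   Context: A function $f\in C^m([a,b],\mathbb{K})$ has a zero of order $k$ at $c$ if $f(c)=\dots=f^{(k-1)}(c)=0$ and $f^{(k)}(c)\ne0$ (one-sided derivatives at endpoints). For an $(m+1)$-dimensional space $V\subset C^m([a,b],\mathbb{K})$, a Bernstein basis for $\{a,b\}$ is a system $p_{m,0},\dots,p_{m,m}$ in $V$ such that each $p_{m,k}$ has a zero of order exactly $k$ at $a$ and of order exactly $m-k$ at $b$. For strictly positive (real-valued, $>0$ on $[a,b]$) $f_0\in U_n$, $D_{f_0}U_n:=\{\frac{d}{dx}(f/f_0):f\in U_n\}$, an $n$-dimensional subspace of $C^{n-1}([a,b],\mathbb{K})$. *)

(* Functions
   [a,b] -> K are represented as functions R -> R[i]; only their values on
   [a,b] matter.  In the real case (K = R) the functions are R[i]-valued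
   functions taking real values on [a,b], and the scalars are real. *)
From HB Require Import structures.
From mathcomp Require Import all_boot all_order all_algebra.
From mathcomp Require Import complex.
From mathcomp Require Import boolp classical_sets reals.
Set Implicit Arguments. Unset Strict Implicit. Unset Printing Implicit Defensive.
Import Order.TTheory GRing.Theory Num.Theory.
Local Open Scope ring_scope.
Local Open Scope complex_scope.

Section Defs.
Variable R : realType.
Local Notation C := R[i].

Definition in_ab (a b x : R) : Prop := a <= x <= b.

Definition is_deriv_within (a b : R) (f : R -> C) (x : R) (L : C) : Prop :=
  forall eps : R, 0 < eps -> exists2 delta : R, 0 < delta &
    forall h : R, h != 0 -> `|h| < delta -> in_ab a b (x + h) ->
      `| (f (x + h) - f x) / h%:C - L | < eps%:C.

(* the derivative within [a,b] (a chosen value; meaningful when it exists) *)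
Definition dwithin (a b : R) (f : R -> C) : R -> C :=
  fun x => xget 0 [set L | is_deriv_within a b f x L].

Definition nderiv (a b : R) (k : nat) (f : R -> C) : R -> C :=
  iter k (dwithin a b) f.

Definition cont_within (a b : R) (f : R -> C) (x : R) : Prop :=
  forall eps : R, 0 < eps -> exists2 delta : R, 0 < delta &
    forall y : R, in_ab a b y -> `|y - x| < delta -> `|f y - f x| < eps%:C.

Definition Cm (a b : R) (m : nat) (f : R -> C) : Prop :=
  forall k : nat, (k <= m)%N -> forall x : R, in_ab a b x ->
    ((k < m)%N -> exists L, is_deriv_within a b (nderiv a b k f) x L) /\
    cont_within a b (nderiv a b k f) x.

(* scalar field K : R (rc = true) or C (rc = false) *)
Definition scalK (rc : bool) (z : C) : bool := if rc then z \is Num.real else true.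

Definition subspaceCm (rc : bool) (a b : R) (m : nat) (V : (R -> C) -> Prop) : Prop :=
  V (fun _ => 0) /\
  (forall f g (l : C), V f -> V g -> scalK rc l -> V (fun x => l * f x + g x)) /\
  (forall f, V f -> Cm a b m f) /\
  (forall f, V f -> forall x, in_ab a b x -> scalK rc (f x)).

Definition has_dim (rc : bool) (a b : R) (V : (R -> C) -> Prop) (d : nat) : Prop :=
  exists e : 'I_d -> (R -> C),
    (forall i, V (e i)) /\
    (forall l : 'I_d -> C, (forall i, scalK rc (l i)) ->
       (forall x, in_ab a b x -> \sum_(i < d) l i * e i x = 0) ->
       forall i, l i = 0) /\
    (forall f, V f -> exists2 l : 'I_d -> C, (forall i, scalK rc (l i)) &
       forall x, in_ab a b x -> f x = \sum_(i < d) l i * e i x).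

Definition zero_order (a b : R) (f : R -> C) (c : R) (k : nat) : Prop :=
  (forall j : nat, (j < k)%N -> nderiv a b j f c = 0) /\ nderiv a b k f c != 0.

Definition bernstein_basis (a b : R) (m : nat) (V : (R -> C) -> Prop)
  (p : nat -> R -> C) : Prop :=
  forall k : nat, (k <= m)%N ->
    V (p k) /\ zero_order a b (p k) a k /\ zero_order a b (p k) b (m - k).

Definition Dspace (a b : R) (f0 : R -> C) (U : (R -> C) -> Prop) : (R -> C) -> Prop :=
  fun g => exists2 f, U f &
    forall x, in_ab a b x -> g x = dwithin a b (fun y => f y / f0 y) x.

End Defs.

From HB Require Import structures.
From mathcomp Require Import all_boot all_order all_algebra.
From mathcomp Require Import complex.
From mathcomp Require Import boolp classical_sets reals.
From mathcomp Require Import ring lra zify.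
Import Order.TTheory GRing.Theory Num.Theory.
Local Open Scope ring_scope.
Local Open Scope complex_scope.
Set Implicit Arguments. Unset Strict Implicit.

(* Write [f0 = \sum_k alpha_k p_k].  The derivatives [(p_k / f0)'] lie in [D_{f0} U_n],
   which the [q_l] span, say [(p_k / f0)' = \sum_l Lam_{k,l} q_l].  As [(p_k / f0)']
   vanishes to order [k - 1] at [a] and to order [n - k - 1] at [b], comparing zero
   orders leaves only [Lam_{k,k-1} = c_k] and [Lam_{k,k} = d_k].  Differentiating
   [1 = \sum_k alpha_k p_k / f0] and using that the [q_l] are free then gives
   [alpha_l d_l + alpha_{l+1} c_{l+1} = 0], and [alpha_0 = f0(a) / p_0(a)] because
   [p_k(a) = 0] for [k > 0]. *)

Section Tendsto0.
Variables (R : realType) (K : numFieldType).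
Implicit Types (P : R -> Prop) (F G : R -> K) (L M : K).

Definition tendsto0 P F L := forall e : K, 0 < e -> exists2 d : R, 0 < d &
  forall h, P h -> `|h| < d -> `|F h - L| < e.

Lemma eq_tendsto0 P F G L : (forall h, P h -> F h = G h) ->
  tendsto0 P F L -> tendsto0 P G L.
Proof.
move=> FG tF e e0; have [d d0 Hd] := tF e e0; exists d => // h Ph hd.
by rewrite -FG //; apply: Hd.
Qed.

Lemma sub_tendsto0 (P Q : R -> Prop) F L : (forall h, Q h -> P h) ->
  tendsto0 P F L -> tendsto0 Q F L.
Proof.
move=> QP tF e e0; have [d d0 Hd] := tF e e0; exists d => // h Qh hd.
exact/Hd/hd/QP.
Qed.

Lemma tendsto0_cst P L : tendsto0 P (fun _ => L) L.
Proof. by move=> e e0; exists 1 => // h _ _; rewrite subrr normr0. Qed.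

Lemma tendsto0D P F G L M : tendsto0 P F L -> tendsto0 P G M ->
  tendsto0 P (fun h => F h + G h) (L + M).
Proof.
move=> tF tG e e0; have e2 : 0 < e / 2 by rewrite divr_gt0.
have [d1 d10 H1] := tF _ e2; have [d2 d20 H2] := tG _ e2.
exists (Num.min d1 d2) => [|h Ph]; first by rewrite lt_min d10 d20.
rewrite lt_min => /andP[h1 h2]; rewrite opprD addrACA.
apply: le_lt_trans (ler_normD _ _) _.
by rewrite [e]splitr; apply: ltrD; [apply: H1 | apply: H2].
Qed.

Lemma tendsto0Z P F L c : tendsto0 P F L -> tendsto0 P (fun h => c * F h) (c * L).
Proof.
move=> tF; have [->|c0] := eqVneq c 0.
  by rewrite mul0r; apply: eq_tendsto0 (tendsto0_cst P 0) => h _; rewrite mul0r.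
move=> e e0; have ec : 0 < e / `|c| by rewrite divr_gt0 ?normr_gt0.
have [d d0 Hd] := tF _ ec; exists d => // h Ph hd.
by rewrite -mulrBr normrM -ltr_pdivlMl ?normr_gt0 // mulrC; apply: Hd.
Qed.

Lemma tendsto0M P F G L M : tendsto0 P F L -> tendsto0 P G M ->
  tendsto0 P (fun h => F h * G h) (L * M).
Proof.
move=> tF tG.
have null_mul u v : tendsto0 P u 0 -> tendsto0 P v 0 ->
    tendsto0 P (fun h => u h * v h) 0.
  move=> tu tv e e0; have [d1 d10 H1] := tu _ e0; have [d2 d20 H2] := tv _ ltr01.
  exists (Num.min d1 d2) => [|h Ph]; first by rewrite lt_min d10 d20.
  rewrite lt_min => /andP[h1 h2].
  have := H1 _ Ph h1; have := H2 _ Ph h2; rewrite !subr0 normrM => v1 u1.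
  by apply: le_lt_trans u1; apply: ler_piMr => //; apply: ltW.
have centre H N : tendsto0 P H N -> tendsto0 P (fun h => H h - N) 0.
  by move=> tH; rewrite -(subrr N); apply: tendsto0D tH (tendsto0_cst _ _).
have := tendsto0D (tendsto0D (tendsto0D
  (null_mul _ _ (centre _ _ tF) (centre _ _ tG)) (tendsto0Z L tG))
  (tendsto0Z M tF)) (tendsto0_cst P (- (L * M))).
have -> : 0 + L * M + M * L + - (L * M) = L * M by ring.
by apply: eq_tendsto0 => h _; ring.
Qed.

Lemma tendsto0V P G M : M != 0 -> tendsto0 P G M ->
  tendsto0 P (fun h => (G h)^-1) M^-1.
Proof.
move=> M0 tG e e0; have nM : 0 < `|M| by rewrite normr_gt0.
have m2 : 0 < `|M| / 2 by rewrite divr_gt0.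
have em : 0 < e * (`|M| / 2 * `|M|) by apply: mulr_gt0 => //; apply: mulr_gt0.
have [d1 d10 H1] := tG _ m2; have [d2 d20 H2] := tG _ em.
exists (Num.min d1 d2) => [|h Ph]; first by rewrite lt_min d10 d20.
rewrite lt_min => /andP[h1 h2]; have g1 := H1 _ Ph h1.
have gM : `|M| / 2 < `|G h|.
  have : `|M| <= `|G h| + `|G h - M|.
    by have := ler_normB (G h) (G h - M); rewrite opprB addrCA subrr addr0.
  rewrite -(ltrD2r (`|M| / 2)) -splitr => /le_lt_trans; apply.
  by rewrite ltrD2l.
have G0 : G h != 0 by rewrite -normr_gt0; apply: lt_trans gM.
have -> : (G h)^-1 - M^-1 = (M - G h) / (G h * M) by field; rewrite G0 M0.
rewrite normrM normfV normrM ltr_pdivrMr ?mulr_gt0 ?normr_gt0 // distrC.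
apply: lt_le_trans (H2 _ Ph h2) _.
by rewrite ler_pM2l // ler_pM2r // ltW.
Qed.

Lemma tendsto0_unique P F L M :
  (forall d : R, 0 < d -> exists h, P h /\ `|h| < d) ->
  tendsto0 P F L -> tendsto0 P F M -> L = M.
Proof.
move=> Pdense tL tM; apply/eqP; rewrite -subr_eq0; apply/negP => /negP LM.
have e0 : 0 < `|L - M| / 2 by rewrite divr_gt0 ?normr_gt0.
have [d1 d10 H1] := tL _ e0; have [d2 d20 H2] := tM _ e0.
have md : 0 < Num.min d1 d2 by rewrite lt_min d10 d20.
have [h [Ph]] := Pdense _ md.
rewrite lt_min => /andP[h1 h2].
have : `|L - M| <= `|F h - M| + `|F h - L|.
  have -> : L - M = (F h - M) - (F h - L) by ring.
  exact: ler_normB.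
have := ltrD (H1 _ Ph h1) (H2 _ Ph h2); rewrite -splitr addrC.
by move=> /[swap] /le_lt_trans /[apply]; rewrite ltxx.
Qed.

End Tendsto0.

Section DerivWithin.
Variables (R : realType) (a b : R).
Hypothesis ab : a < b.
Local Notation C := R[i].
Local Notation I := (in_ab a b).
Implicit Types (f g : R -> C) (x : R).

Lemma in_ab_l : I a. Proof. by rewrite /in_ab lexx ltW. Qed.
Lemma in_ab_r : I b. Proof. by rewrite /in_ab lexx ltW. Qed.

Definition step_in x h := I (x + h).
Definition step_in_nz x h := h != 0 /\ step_in x h.
Definition diff_quot f x h := (f (x + h) - f x) / h%:C.

Lemma gt0C_real (e : C) : 0 < e -> e = (complex.Re e)%:C /\ 0 < complex.Re e.
Proof. by case: e => r i; rewrite ltcE /= => /andP[/eqP -> ->]. Qed.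

Lemma normC_real (h : R) : `|h%:C| = `|h|%:C.
Proof. by rewrite normc_def /= expr0n addr0 sqrtr_sqr. Qed.

Lemma is_deriv_withinE f x L :
  is_deriv_within a b f x L <-> tendsto0 (step_in_nz x) (diff_quot f x) L.
Proof.
split=> [H e /gt0C_real[-> r0] | H eps eps0].
  by have [d d0 Hd] := H _ r0; exists d => // h [h0 hab] hd; apply: Hd.
have e0 : 0 < eps%:C by rewrite ltcR.
have [d d0 Hd] := H _ e0.
by exists d => // h h0 hd hab; apply: Hd.
Qed.

Lemma cont_withinE f x :
  cont_within a b f x <-> tendsto0 (step_in x) (fun h => f (x + h)) (f x).
Proof.
split=> [H e /gt0C_real[-> r0] | H eps eps0].
  have [d d0 Hd] := H _ r0; exists d => // h hab hd.
  by apply: Hd => //; rewrite addrAC subrr add0r.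
have e0 : 0 < eps%:C by rewrite ltcR.
have [d d0 Hd] := H _ e0.
by exists d => // y yI yd; have := Hd (y - x); rewrite /step_in addrC subrK; apply.
Qed.

Lemma step_in_nz_dense x : I x ->
  forall d : R, 0 < d -> exists h, step_in_nz x h /\ `|h| < d.
Proof.
move=> /andP[xa xb] d d0; rewrite /step_in_nz /step_in /in_ab.
have small (w : R) : 0 < w -> exists2 m, 0 < m & m <= d /\ m <= w.
  move=> w0; exists (Num.min d w); first by rewrite lt_min d0 w0.
  by rewrite !ge_min !lexx orbT.
have [xlt|xge] := ltP x b.
  have [m m0 [md mb]] : exists2 m, 0 < m & m <= d /\ m <= b - x.
    by apply: small; rewrite subr_gt0.
  exists (m / 2); rewrite gtr0_norm ?divr_gt0 //.
  by split; [split; [rewrite gt_eqF ?divr_gt0 | apply/andP; split] |]; lra.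
have [m m0 [md mb]] : exists2 m, 0 < m & m <= d /\ m <= b - a.
  by apply: small; rewrite subr_gt0.
exists (- (m / 2)); rewrite normrN gtr0_norm ?divr_gt0 //.
by split; [split; [rewrite oppr_eq0 gt_eqF ?divr_gt0 | apply/andP; split] |]; lra.
Qed.

Lemma is_deriv_within_unique f x L M : I x ->
  is_deriv_within a b f x L -> is_deriv_within a b f x M -> L = M.
Proof.
move=> xI /is_deriv_withinE tL /is_deriv_withinE tM.
exact: tendsto0_unique (step_in_nz_dense xI) tL tM.
Qed.

Lemma dwithinE f x L : I x -> is_deriv_within a b f x L -> dwithin a b f x = L.
Proof.
by move=> xI fL; apply: xget_unique => // M fM; apply: is_deriv_within_unique fM fL.
Qed.

Lemma tendsto0_idC P : tendsto0 P (fun h : R => h%:C) 0.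
Proof.
move=> e /gt0C_real[-> e0]; exists (complex.Re e) => // h _ hd.
by rewrite subr0 normC_real ltcR.
Qed.

Lemma is_deriv_within_cont f x L : is_deriv_within a b f x L -> cont_within a b f x.
Proof.
move=> /is_deriv_withinE fL; apply/cont_withinE => e e0.
have := tendsto0D (tendsto0M fL (tendsto0_idC (step_in_nz x)))
  (tendsto0_cst (step_in_nz x) (f x)).
rewrite mulr0 add0r => /(_ e e0) [d d0 Hd]; exists d => // h hI hd.
have [->|h0] := eqVneq h 0; first by rewrite addr0 subrr normr0.
have hC : h%:C != 0 by rewrite fmorph_eq0.
by have := Hd h (conj h0 hI) hd; rewrite /diff_quot divfK // subrK.
Qed.

Lemma is_deriv_within_lin f g l x Lf Lg :
  is_deriv_within a b f x Lf -> is_deriv_within a b g x Lg ->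
  is_deriv_within a b (fun y => l * f y + g y) x (l * Lf + Lg).
Proof.
move=> /is_deriv_withinE fL /is_deriv_withinE gL; apply/is_deriv_withinE.
by apply: eq_tendsto0 (tendsto0D (tendsto0Z l fL) gL) => h _; rewrite /diff_quot; ring.
Qed.

Lemma is_deriv_within_cst (c : C) x : is_deriv_within a b (fun _ => c) x 0.
Proof.
apply/is_deriv_withinE; apply: eq_tendsto0 (tendsto0_cst _ 0) => h _.
by rewrite /diff_quot subrr mul0r.
Qed.

Lemma is_deriv_withinM f g x Lf Lg :
  is_deriv_within a b f x Lf -> is_deriv_within a b g x Lg ->
  is_deriv_within a b (fun y => f y * g y) x (Lf * g x + f x * Lg).
Proof.
move=> fL gL; have /cont_withinE gc := is_deriv_within_cont gL.
have {}gc := sub_tendsto0 (Q := step_in_nz x) (fun h => @proj2 _ _) gc.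
move: fL gL => /is_deriv_withinE fL /is_deriv_withinE gL; apply/is_deriv_withinE.
apply: eq_tendsto0 (tendsto0D (tendsto0M fL gc) (tendsto0Z (f x) gL)) => h _.
by rewrite /diff_quot; ring.
Qed.

Lemma is_deriv_withinV f x L : I x -> (forall y, I y -> f y != 0) ->
  is_deriv_within a b f x L ->
  is_deriv_within a b (fun y => (f y)^-1) x (- L * ((f x)^-1 * (f x)^-1)).
Proof.
move=> xI f0 fL; have /cont_withinE fc := is_deriv_within_cont fL.
have {}fc := sub_tendsto0 (Q := step_in_nz x) (fun h => @proj2 _ _) fc.
move: fL => /is_deriv_withinE fL; apply/is_deriv_withinE.
have := tendsto0M (tendsto0Z (-1) fL) (tendsto0Z (f x)^-1 (tendsto0V (f0 _ xI) fc)).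
rewrite mulN1r; apply: eq_tendsto0 => h [h0 hI].
have hC : h%:C != 0 by rewrite fmorph_eq0.
by rewrite /diff_quot; field; rewrite hC !f0.
Qed.

End DerivWithin.

Section SmoothWithin.
Variables (R : realType) (a b : R).
Hypothesis ab : a < b.
Local Notation C := R[i].
Local Notation I := (in_ab a b).
Local Notation D := (dwithin a b).
Local Notation nd := (nderiv a b).
Implicit Types (f g : R -> C) (x : R).

Definition eq_on f g := forall x, I x -> f x = g x.

Lemma eq_on_sym f g : eq_on f g -> eq_on g f.
Proof. by move=> fg x xI; rewrite fg. Qed.

Lemma eq_on_is_deriv_within f g x L : eq_on f g -> I x ->
  is_deriv_within a b f x L -> is_deriv_within a b g x L.
Proof.
move=> fg xI fL e e0; have [d d0 Hd] := fL e e0.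
by exists d => // h h0 hd hI; rewrite -!fg //; apply: Hd.
Qed.

Lemma eq_on_cont_within f g x : eq_on f g -> I x ->
  cont_within a b f x -> cont_within a b g x.
Proof.
move=> fg xI fc e e0; have [d d0 Hd] := fc e e0.
by exists d => // y yI yd; rewrite -!fg //; apply: Hd.
Qed.

Lemma eq_on_dwithin f g : eq_on f g -> eq_on (D f) (D g).
Proof.
move=> fg x xI; congr xget; apply/funext => L; apply/propext.
by split; apply: eq_on_is_deriv_within => //; apply: eq_on_sym.
Qed.

Lemma eq_on_nderiv k f g : eq_on f g -> eq_on (nd k f) (nd k g).
Proof. by move=> fg; elim: k => [|k IH] x xI //=; [apply: fg | apply: eq_on_dwithin]. Qed.

Lemma nderivSr k f : nd k.+1 f = nd k (D f).
Proof. exact: iterSr. Qed.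

Lemma eq_on_Cm m f g : eq_on f g -> Cm a b m f -> Cm a b m g.
Proof.
move=> fg fC k km x xI; have [fD fc] := fC k km x xI.
have ndfg := eq_on_nderiv k fg; split; last exact: eq_on_cont_within fc.
by move=> /fD[L fL]; exists L; apply: eq_on_is_deriv_within fL.
Qed.

Lemma Cm_leq m k f : (k <= m)%N -> Cm a b m f -> Cm a b k f.
Proof.
move=> km fC j jk x xI; have [fD fc] := fC j (leq_trans jk km) x xI.
by split=> // jk'; apply: fD; apply: leq_trans jk' km.
Qed.

Lemma Cm0 f : Cm a b 0 f <-> (forall x, I x -> cont_within a b f x).
Proof.
split=> [fC x xI | fc [|//] _ x xI]; first by have [] := fC 0%N (leqnn _) x xI.
by split=> //; apply: fc.
Qed.

Lemma CmS m f : Cm a b m.+1 f <->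
  [/\ forall x, I x -> exists L, is_deriv_within a b f x L,
      forall x, I x -> cont_within a b f x & Cm a b m (D f)].
Proof.
split=> [fC | [fD fc DfC] [|k] km x xI].
- split=> [x xI | x xI | k km x xI]; first by have [fD _] := fC 0%N isT x xI; apply: fD.
    by have [] := fC 0%N isT x xI.
  by have := fC k.+1 km x xI; rewrite -!nderivSr.
- by split=> [_|]; [apply: fD | apply: fc].
- by rewrite !nderivSr; apply: DfC.
Qed.

Lemma Cm_cont m f x : Cm a b m f -> I x -> cont_within a b f x.
Proof. by move=> fC xI; have [] := fC 0%N (leq0n m) x xI. Qed.

Lemma Cm_dwithin m f : Cm a b m.+1 f -> Cm a b m (D f).
Proof. by case/CmS. Qed.

Lemma Cm_is_deriv_within m f x : Cm a b m.+1 f -> I x ->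
  is_deriv_within a b f x (D f x).
Proof. by move=> /CmS[fD _ _] xI; have [L fL] := fD x xI; rewrite (dwithinE ab xI fL). Qed.

Lemma Cm_cst m (c : C) : Cm a b m (fun _ => c).
Proof.
elim: m c => [|m IH] c.
  by apply/Cm0 => x _; apply: is_deriv_within_cont (is_deriv_within_cst _ _ _ _).
apply/CmS; split=> [x _ | x _ |]; first by exists 0; apply: is_deriv_within_cst.
  exact: is_deriv_within_cont (is_deriv_within_cst _ _ _ _).
by apply: eq_on_Cm (IH 0) => x xI; rewrite (dwithinE ab xI (is_deriv_within_cst _ _ _ _)).
Qed.

Lemma nderiv_cst0 k x : I x -> nd k (fun _ => 0) x = 0.
Proof.
elim: k x => [//|k IH] x xI /=; rewrite (eq_on_dwithin IH xI).
exact/(dwithinE ab xI)/is_deriv_within_cst.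
Qed.

Lemma cont_within_lin f g l x : cont_within a b f x -> cont_within a b g x ->
  cont_within a b (fun y => l * f y + g y) x.
Proof.
by move=> /cont_withinE fc /cont_withinE gc; apply/cont_withinE/tendsto0D/gc/tendsto0Z.
Qed.

Lemma cont_withinM f g x : cont_within a b f x -> cont_within a b g x ->
  cont_within a b (fun y => f y * g y) x.
Proof. by move=> /cont_withinE fc /cont_withinE gc; apply/cont_withinE/tendsto0M. Qed.

Lemma cont_withinV f x : I x -> (forall y, I y -> f y != 0) ->
  cont_within a b f x -> cont_within a b (fun y => (f y)^-1) x.
Proof. by move=> xI f0 /cont_withinE fc; apply/cont_withinE/tendsto0V/fc/f0. Qed.

Lemma Cm_lin m f g l : Cm a b m f -> Cm a b m g -> Cm a b m (fun y => l * f y + g y).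
Proof.
elim: m f g => [|m IH] f g.
  by move=> /Cm0 fc /Cm0 gc; apply/Cm0 => x xI; apply: cont_within_lin (fc x xI) (gc x xI).
move=> fC gC; have fD := Cm_is_deriv_within fC; have gD := Cm_is_deriv_within gC.
apply/CmS; split=> [x xI | x xI |].
- by eexists; apply: is_deriv_within_lin (fD x xI) (gD x xI).
- exact: cont_within_lin (Cm_cont fC xI) (Cm_cont gC xI).
apply: eq_on_Cm (IH _ _ (Cm_dwithin fC) (Cm_dwithin gC)) => x xI.
by rewrite (dwithinE ab xI (is_deriv_within_lin _ (fD x xI) (gD x xI))).
Qed.

Lemma nderiv_lin m k f g l x : Cm a b m f -> Cm a b m g -> (k <= m)%N -> I x ->
  nd k (fun y => l * f y + g y) x = l * nd k f x + nd k g x.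
Proof.
elim: k m f g x => [//|k IH] [//|m] f g x fC gC km xI.
rewrite !nderivSr -(IH m _ _ _ (Cm_dwithin fC) (Cm_dwithin gC) km xI); apply: eq_on_nderiv => // y yI.
by rewrite (dwithinE ab yI (is_deriv_within_lin l (Cm_is_deriv_within fC yI)
  (Cm_is_deriv_within gC yI))).
Qed.

Lemma Cm_mul m f g : Cm a b m f -> Cm a b m g -> Cm a b m (fun y => f y * g y).
Proof.
elim: m f g => [|m IH] f g.
  by move=> /Cm0 fc /Cm0 gc; apply/Cm0 => x xI; apply: cont_withinM (fc x xI) (gc x xI).
move=> fC gC; have fD := Cm_is_deriv_within fC; have gD := Cm_is_deriv_within gC.
apply/CmS; split=> [x xI | x xI |].
- by eexists; apply: is_deriv_withinM (fD x xI) (gD x xI).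
- exact: cont_withinM (Cm_cont fC xI) (Cm_cont gC xI).
have := Cm_lin 1 (IH _ _ (Cm_dwithin fC) (Cm_leq (leqnSn m) gC))
  (IH _ _ (Cm_leq (leqnSn m) fC) (Cm_dwithin gC)).
apply: eq_on_Cm => x xI.
by rewrite (dwithinE ab xI (is_deriv_withinM (fD x xI) (gD x xI))) mul1r.
Qed.

Lemma Cm_inv m f : (forall y, I y -> f y != 0) -> Cm a b m f ->
  Cm a b m (fun y => (f y)^-1).
Proof.
move=> f0; elim: m => [|m IH].
  by move=> /Cm0 fc; apply/Cm0 => x xI; apply: cont_withinV (fc x xI).
move=> fC; have {}IH := IH (Cm_leq (leqnSn m) fC).
apply/CmS; split=> [x xI | x xI |].
- by eexists; apply: is_deriv_withinV (Cm_is_deriv_within fC xI).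
- exact: cont_withinV (Cm_cont fC xI).
have := Cm_lin (-1) (Cm_mul (Cm_dwithin fC) (Cm_mul IH IH)) (Cm_cst 0).
apply: eq_on_Cm => x xI.
by rewrite (dwithinE ab xI (is_deriv_withinV xI f0 (Cm_is_deriv_within fC xI))) addr0 !mulNr mul1r.
Qed.

End SmoothWithin.

Section Spans.
Variables (R : realType) (a b : R).
Hypothesis ab : a < b.
Local Notation C := R[i].
Local Notation I := (in_ab a b).
Local Notation D := (dwithin a b).
Local Notation nd := (nderiv a b).
Local Notation eq_on := (eq_on a b).
Implicit Types (f g : R -> C) (v w : nat -> R -> C) (lam : nat -> C).

Lemma sum_fun_ord_recr N lam v :
  (fun y => \sum_(i < N.+1) lam i * v i y) =
  (fun y => lam N * v N y + \sum_(i < N) lam i * v i y).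
Proof. by apply/funext => y; rewrite big_ord_recr addrC. Qed.

Lemma Cm_sum m N lam v : (forall i, (i < N)%N -> Cm a b m (v i)) ->
  Cm a b m (fun y => \sum_(i < N) lam i * v i y).
Proof.
elim: N => [|N IH] vC.
  by apply: eq_on_Cm (Cm_cst ab 0) => x _; rewrite big_ord0.
rewrite sum_fun_ord_recr; apply: (Cm_lin ab); first exact: vC.
by apply: IH => i iN; apply/vC/ltnW.
Qed.

Lemma nderiv_sum m N lam v k x : (forall i, (i < N)%N -> Cm a b m (v i)) ->
  (k <= m)%N -> I x ->
  nd k (fun y => \sum_(i < N) lam i * v i y) x = \sum_(i < N) lam i * nd k (v i) x.
Proof.
move=> vC km xI; elim: N vC => [|N IH] vC.
  rewrite [RHS]big_ord0 -[RHS](nderiv_cst0 ab k xI).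
  by apply: eq_on_nderiv => // y _; rewrite big_ord0.
have vC' i : (i < N)%N -> Cm a b m (v i) by move=> iN; apply/vC/ltnW.
rewrite sum_fun_ord_recr (nderiv_lin ab _ (vC N _) (Cm_sum _ vC') km xI) //.
by rewrite IH // big_ord_recr /= addrC.
Qed.

Lemma nderivM_vanishing (c : R) k : forall m f g, Cm a b m f -> Cm a b m g ->
  (k <= m)%N -> I c -> (forall j, (j < k)%N -> nd j f c = 0) ->
  (forall j, (j < k)%N -> nd j (fun y => f y * g y) c = 0) /\
  nd k (fun y => f y * g y) c = nd k f c * g c.
Proof.
elim: k => [|k IH] [//|m] f g fC gC km cI f0 //.
have DfC := Cm_dwithin fC; have DgC := Cm_dwithin gC.
have fC' := Cm_leq (leqnSn m) fC; have gC' := Cm_leq (leqnSn m) gC.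
have Df0 j : (j < k)%N -> nd j (D f) c = 0 by move=> jk; rewrite -nderivSr f0.
have [Df1 Df2] := IH m _ _ DfC gC' km cI Df0.
have [Dg1 Dg2] := IH m _ _ fC' DgC km cI (fun j jk => f0 j (ltnW jk)).
have nderivSM j : (j <= m)%N -> nd j.+1 (fun y => f y * g y) c =
    nd j (fun y => D f y * g y) c + nd j (fun y => f y * D g y) c.
  move=> jm; rewrite nderivSr -[X in X + _]mul1r -(nderiv_lin ab 1 (Cm_mul ab DfC gC') (Cm_mul ab fC' DgC) jm cI).
  apply: eq_on_nderiv => // y yI; rewrite mul1r.
  by rewrite (dwithinE ab yI (is_deriv_withinM (Cm_is_deriv_within ab fC yI)
    (Cm_is_deriv_within ab gC yI))).
split=> [[_|j jk]|]; first by rewrite /= (f0 0%N isT : f c = 0) mul0r.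
  by rewrite nderivSM ?Df1 ?Dg1 ?addr0 //; apply: leq_trans (ltnW jk) km.
by rewrite nderivSM // Df2 Dg2 (f0 k) // mul0r addr0 -nderivSr.
Qed.

Definition in_span N v f :=
  exists lam, eq_on f (fun y => \sum_(i < N) lam i * v i y).

Definition free_on N v := forall lam,
  (forall x, I x -> \sum_(i < N) lam i * v i x = 0) -> forall i, (i < N)%N -> lam i = 0.

Lemma Cm_in_span m N v f : (forall i, (i < N)%N -> Cm a b m (v i)) ->
  in_span N v f -> Cm a b m f.
Proof. by move=> vC [lam flam]; apply: eq_on_Cm (eq_on_sym flam) (Cm_sum lam vC). Qed.

Lemma in_span_choice M N v w : (forall j, (j < M)%N -> in_span N v (w j)) ->
  {Lam : nat -> nat -> C & forall j, (j < M)%N ->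
    eq_on (w j) (fun y => \sum_(i < N) Lam j i * v i y)}.
Proof.
move=> wv; apply: (@choice _ _ (fun j (lam : nat -> C) => (j < M)%N ->
  eq_on (w j) (fun y => \sum_(i < N) lam i * v i y))) => j.
have [/wv[lam wlam]|Mj] := ltnP j M; first by exists lam.
by exists (fun=> 0).
Qed.

Lemma in_span_sum M N v w nu : (forall j, (j < M)%N -> in_span N v (w j)) ->
  in_span N v (fun y => \sum_(j < M) nu j * w j y).
Proof.
move=> /in_span_choice[Lam wLam]; exists (fun i => \sum_(j < M) nu j * Lam j i).
move=> x xI; under eq_bigr => j _ do rewrite wLam // big_distrr /=.
rewrite exchange_big; apply: eq_bigr => i _; rewrite big_distrl.
by apply: eq_bigr => j _; rewrite mulrA.
Qed.

Lemma in_span_trans M N v w f : in_span M w f ->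
  (forall j, (j < M)%N -> in_span N v (w j)) -> in_span N v f.
Proof.
move=> [nu fnu] /(in_span_sum nu)[lam wlam].
by exists lam => x xI; rewrite fnu // wlam.
Qed.

Lemma in_span_self N v i : (i < N)%N -> in_span N v (v i).
Proof.
move=> iN; exists (fun k => (k == i)%:R) => x _.
rewrite (big_only1 (Ordinal iN)) //= ?eqxx ?mul1r // => k.
by rewrite -val_eqE /= => /negbTE->; rewrite mul0r.
Qed.

(* The coordinates of the [v i] on the [w j] form a square matrix, which is
   invertible because the [v i] are free. *)
Lemma in_span_swap N v w : free_on N v ->
  (forall i, (i < N)%N -> in_span N w (v i)) ->
  forall j, (j < N)%N -> in_span N v (w j).
Proof.
case: N => [//|N] vfree /in_span_choice[L vL].
pose M : 'M[C]_N.+1 := \matrix_(i, j) L i j.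
have vM (i : 'I_N.+1) x : I x -> v i x = \sum_k M i k * w k x.
  by move=> xI; rewrite vL //; apply: eq_bigr => k _; rewrite mxE.
have vMw m (A : 'M[C]_(m, N.+1)) (i : 'I_m) x : I x ->
    \sum_k A i k * v k x = \sum_l (A *m M) i l * w l x.
  move=> xI; under [RHS]eq_bigr => l _ do rewrite mxE big_distrl /=.
  rewrite exchange_big; apply: eq_bigr => k _; rewrite vM // big_distrr /=.
  by apply: eq_bigr => l _; rewrite mulrA.
have Munit : M \in unitmx.
  rewrite -row_free_unit; apply: inj_row_free => u uM0; apply/rowP => i.
  rewrite mxE; have := vfree (fun k => u 0 (inord k)) _ i (ltn_ord i).
  rewrite inord_val; apply=> x xI; under eq_bigr => k _ do rewrite inord_val.
  by rewrite vMw // uM0; apply: big1 => l _; rewrite mxE mul0r.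
move=> j jN; exists (fun i => invmx M (inord j) (inord i)) => x xI.
under eq_bigr => i _ do rewrite inord_val.
rewrite vMw // mulVmx // (big_only1 (inord j)) //= ?mxE ?eqxx ?mul1r ?inordK //.
by move=> l; rewrite mxE eq_sym => /negbTE->; rewrite mul0r.
Qed.

(* Strong induction on the order [t]: all terms of order [< t] are already known to
   vanish, all terms of order [> t] vanish to order [t] at [c], so the [t]-th
   derivative at [c] only sees the unique term of order [t]. *)
Lemma zero_order_coef_eq0 m N (o : nat -> nat) lam v G c J : I c ->
  (forall i, (i < N)%N -> Cm a b m (v i)) ->
  (forall i, (i < N)%N -> (o i <= m)%N) ->
  (forall i j, (i < N)%N -> (j < N)%N -> o i = o j -> i = j) ->
  (forall i, (i < N)%N -> zero_order a b (v i) c (o i)) ->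
  eq_on G (fun y => \sum_(i < N) lam i * v i y) ->
  (forall j, (j < J)%N -> nd j G c = 0) ->
  forall i, (i < N)%N -> (o i < J)%N -> lam i = 0.
Proof.
move=> cI vC om oinj vo Gv G0.
suff lam0 t i : (i < N)%N -> (o i < t)%N -> (t <= J)%N -> lam i = 0.
  by move=> i iN oJ; apply: (lam0 J).
elim: t i => [//|t IH] i iN oit tJ.
have [oi|] := ltnP (o i) t; first by apply: IH => //; apply: ltnW.
rewrite leq_eqVlt ltnNge -ltnS oit orbF => /eqP ti.
have tm : (t <= m)%N by rewrite ti om.
have := G0 t tJ; rewrite (eq_on_nderiv t Gv cI) (nderiv_sum lam vC tm cI).
rewrite (big_only1 (Ordinal iN)) //= => [|k].
  have [_] := vo i iN; rewrite -ti => /negbTE vt /eqP.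
  by rewrite mulf_eq0 vt orbF => /eqP.
case: k => k kN /=; rewrite -val_eqE /= => ki _.
have [kt|kt|kt] := ltngtP (o k) t.
- by rewrite (IH k) ?mul0r // ltnW.
- by have [vk _] := vo k kN; rewrite vk ?mulr0.
- by move: ki; rewrite (oinj k i) ?eqxx // kt ti.
Qed.

Lemma bernstein_free m p : (forall i, (i <= m)%N -> Cm a b m (p i)) ->
  (forall i, (i <= m)%N -> zero_order a b (p i) a i) -> free_on m.+1 p.
Proof.
move=> pC pa lam p0 i im.
apply: (zero_order_coef_eq0 (m := m) (N := m.+1) (o := id) (v := p) (G := fun=> 0)
  (J := m.+1) (in_ab_l ab)) => //.
- by move=> x xI; rewrite p0.
- by move=> j _; apply: nderiv_cst0 (in_ab_l ab).
Qed.

End Spans.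

Section BernsteinExpansion.
Variables (R : realType) (rc : bool) (n : nat) (a b : R) (U : (R -> R[i]) -> Prop).
Variables (p q : nat -> R -> R[i]) (f0 : R -> R[i]).
Hypotheses (n_gt0 : (0 < n)%N) (ab : a < b) (U_sub : subspaceCm rc a b n U).
Hypotheses (U_dim : has_dim rc a b U n.+1) (p_basis : bernstein_basis a b n U p).
Hypotheses (U_f0 : U f0) (f0_gt0 : forall x, in_ab a b x -> 0 < f0 x).
Hypothesis q_basis : bernstein_basis a b n.-1 (Dspace a b f0 U) q.
Local Notation C := R[i].
Local Notation I := (in_ab a b).
Local Notation D := (dwithin a b).
Local Notation nd := (nderiv a b).
Local Notation eq_on := (eq_on a b).
Local Notation in_span := (in_span a b).
Local Notation free_on := (free_on a b).

Let aI := in_ab_l ab.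
Let bI := in_ab_r ab.
Let n_eq : n.-1.+1 = n := prednK n_gt0.
Let ltn_pred l : (l < n)%N -> (l <= n.-1)%N. Proof. by move=> ln; rewrite -ltnS n_eq. Qed.

Lemma f0_neq0 y : I y -> f0 y != 0.
Proof. by move=> yI; rewrite gt_eqF ?f0_gt0. Qed.

Lemma Cm_U f : U f -> Cm a b n f.
Proof. by case: U_sub => _ [_ [UC _]]; apply: UC. Qed.

Lemma Cm_p k : (k <= n)%N -> Cm a b n (p k).
Proof. by move=> kn; apply: Cm_U; case: (p_basis kn). Qed.

Lemma p_free : free_on n.+1 p.
Proof. by apply: (bernstein_free ab Cm_p) => k kn; case: (p_basis kn) => _ []. Qed.

Lemma U_in_span f : U f -> in_span n.+1 p f.
Proof.
case: U_dim => e [_ [_ e_span]]; pose w j := e (inord j).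
have Uw g : U g -> in_span n.+1 w g.
  move=> /e_span[l _ gl]; exists (fun j => l (inord j)) => x xI.
  by rewrite gl //; apply: eq_bigr => j _; rewrite /w inord_val.
move=> /Uw fw; apply: in_span_trans fw _.
apply: in_span_swap p_free _ => k kn; apply: Uw.
by case: (p_basis kn).
Qed.

Let Cm_inv_f0 : Cm a b n (fun y => (f0 y)^-1) := Cm_inv ab f0_neq0 (Cm_U U_f0).

Definition p_f0 k y := p k y / f0 y.
Definition Dp_f0 k := D (p_f0 k).

Lemma Cm_p_f0 k : (k <= n)%N -> Cm a b n (p_f0 k).
Proof. by move=> kn; apply: (Cm_mul ab (Cm_p kn) Cm_inv_f0). Qed.

Lemma Cm_Dp_f0 k : (k <= n)%N -> Cm a b n.-1 (Dp_f0 k).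
Proof. by move=> kn; apply: Cm_dwithin; rewrite n_eq; apply: Cm_p_f0. Qed.

Lemma dwithin_sum_p_f0 (mu : nat -> C) x : I x ->
  D (fun y => \sum_(k < n.+1) mu k * p_f0 k y) x = \sum_(k < n.+1) mu k * Dp_f0 k x.
Proof.
move=> xI; rewrite -[LHS]/(nd 1 _ x) (nderiv_sum ab mu (v := p_f0) _ n_gt0 xI) //.
by move=> k; apply: Cm_p_f0.
Qed.

Lemma eq_on_div_f0 f (mu : nat -> C) : eq_on f (fun y => \sum_(k < n.+1) mu k * p k y) ->
  eq_on (fun y => f y / f0 y) (fun y => \sum_(k < n.+1) mu k * p_f0 k y).
Proof.
by move=> fmu y yI; rewrite fmu // big_distrl; apply: eq_bigr => k _; rewrite mulrA.
Qed.

Lemma in_span_Dp_f0 f : U f -> in_span n.+1 Dp_f0 (D (fun y => f y / f0 y)).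
Proof.
move=> /U_in_span[mu /eq_on_div_f0 fmu]; exists mu => x xI.
by rewrite -dwithin_sum_p_f0 //; apply: eq_on_dwithin.
Qed.

Lemma q_in_span l : (l < n)%N -> in_span n.+1 Dp_f0 (q l).
Proof.
move=> ln; have [[f Uf qf] _] := q_basis (ltn_pred ln).
by have [mu fmu] := in_span_Dp_f0 Uf; exists mu => x xI; rewrite qf ?fmu.
Qed.

Lemma Cm_q l : (l < n)%N -> Cm a b n.-1 (q l).
Proof. by move=> /q_in_span; apply: (Cm_in_span ab) => k; apply: Cm_Dp_f0. Qed.

Lemma q_free : free_on n q.
Proof.
rewrite -n_eq; apply: (bernstein_free ab) => l; rewrite -ltnS n_eq => ln.
  exact: Cm_q.
by case: (q_basis (ltn_pred ln)) => _ [].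
Qed.

Lemma q_zero_order l : (l < n)%N ->
  zero_order a b (q l) a l /\ zero_order a b (q l) b (n.-1 - l).
Proof. by move=> /ltn_pred /q_basis[]. Qed.

Definition c_coef k := nd k (p k) a / (f0 a * nd k.-1 (q k.-1) a).
Definition d_coef k := nd (n - k) (p k) b / (f0 b * nd (n.-1 - k) (q k) b).

Lemma c_coef_neq0 k : (0 < k <= n)%N -> c_coef k != 0.
Proof.
case/andP=> k0 kn; have k1n : (k.-1 < n)%N by rewrite prednK.
have [[_ qk] _] := q_zero_order k1n; have [_ [[_ pk] _]] := p_basis kn.
by rewrite mulf_neq0 ?invr_eq0 ?mulf_neq0 ?f0_neq0.
Qed.

Lemma nderiv_Dp_f0_a_eq0 k j : (k <= n)%N -> (j.+1 < k)%N -> nd j (Dp_f0 k) a = 0.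
Proof.
move=> kn jk; have [_ [[pa _] _]] := p_basis kn.
by rewrite -nderivSr; apply: (nderivM_vanishing ab (Cm_p kn) Cm_inv_f0 kn aI pa).1.
Qed.

Lemma nderiv_Dp_f0_a k : (0 < k <= n)%N -> nd k.-1 (Dp_f0 k) a = nd k (p k) a / f0 a.
Proof.
case/andP=> k0 kn; have [_ [[pa _] _]] := p_basis kn.
by rewrite -nderivSr prednK //; apply: (nderivM_vanishing ab (Cm_p kn) Cm_inv_f0 kn aI pa).2.
Qed.

Lemma nderiv_Dp_f0_b_eq0 k j : (k <= n)%N -> (j.+1 < n - k)%N -> nd j (Dp_f0 k) b = 0.
Proof.
move=> kn jk; have [_ [_ [pb _]]] := p_basis kn.
rewrite -nderivSr.
by apply: (nderivM_vanishing ab (Cm_p kn) Cm_inv_f0 (leq_subr k n) bI pb).1.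
Qed.

Lemma nderiv_Dp_f0_b k : (k < n)%N ->
  nd (n.-1 - k) (Dp_f0 k) b = nd (n - k) (p k) b / f0 b.
Proof.
move=> kn; have [_ [_ [pb _]]] := p_basis (ltnW kn).
rewrite -nderivSr -subSn ?ltn_pred // n_eq.
exact: (nderivM_vanishing ab (Cm_p (ltnW kn)) Cm_inv_f0 (leq_subr k n) bI pb).2.
Qed.

Section Coefficients.
Variable alpha : nat -> C.
Hypothesis f0_alpha : eq_on f0 (fun y => \sum_(k < n.+1) alpha k * p k y).

Lemma alpha0E : alpha 0%N = f0 a / p 0%N a.
Proof.
have [_ [[_ pa0] _]] := p_basis (leq0n n).
rewrite (f0_alpha aI) big_ord_recl big1 ?addr0 ?mulfK // => k _.
by have [_ [[pka _] _]] := p_basis (ltn_ord k); rewrite (pka 0%N isT : p _ a = 0) mulr0.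
Qed.

Lemma alpha0_neq0 : alpha 0%N != 0.
Proof.
have [_ [[_ pa0] _]] := p_basis (leq0n n).
by rewrite alpha0E mulf_neq0 ?invr_eq0 ?f0_neq0.
Qed.

Lemma Dp_f0_relation x : I x -> \sum_(k < n.+1) alpha k * Dp_f0 k x = 0.
Proof.
move=> xI; rewrite -dwithin_sum_p_f0 // -(eq_on_dwithin (eq_on_div_f0 f0_alpha) xI).
have f0f0 : eq_on (fun y => f0 y / f0 y) (fun _ => 1) by move=> y yI; rewrite divff ?f0_neq0.
by rewrite (eq_on_dwithin f0f0 xI); apply/(dwithinE ab xI)/is_deriv_within_cst.
Qed.

Lemma Dp_f0_0_in_span : in_span n (fun j => Dp_f0 j.+1) (Dp_f0 0).
Proof.
exists (fun j => - alpha j.+1 / alpha 0%N) => x xI; have a0 := alpha0_neq0.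
move/eqP: (Dp_f0_relation xI); rewrite big_ord_recl /= addrC addr_eq0 => /eqP rel.
transitivity (- (\sum_(j < n) alpha j.+1 * Dp_f0 j.+1 x) / alpha 0%N).
  by rewrite rel opprK mulrC mulKf.
by rewrite -sumrN big_distrl; apply: eq_bigr => j _ /=; rewrite !mulNr mulrAC.
Qed.

Lemma Dp_f0_in_span_shift k : (k <= n)%N -> in_span n (fun j => Dp_f0 j.+1) (Dp_f0 k).
Proof. by case: k => [_|k kn]; [apply: Dp_f0_0_in_span | apply: in_span_self]. Qed.

Lemma Dp_f0_in_span_q k : (k <= n)%N -> in_span n q (Dp_f0 k).
Proof.
move=> kn; apply: (in_span_trans (Dp_f0_in_span_shift kn)) => j jn.
apply: (in_span_swap (w := fun j => Dp_f0 j.+1) q_free _ jn) => l ln.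
by apply: in_span_trans (q_in_span ln) _ => i; apply: Dp_f0_in_span_shift.
Qed.

Section Decomposition.
Variable Lam : nat -> nat -> C.
Hypothesis Dp_f0_Lam : forall k, (k < n.+1)%N ->
  eq_on (Dp_f0 k) (fun y => \sum_(l < n) Lam k l * q l y).

Lemma Lam_eq0_lower k l : (k <= n)%N -> (l < n)%N -> (l.+1 < k)%N -> Lam k l = 0.
Proof.
move=> kn ln lk.
apply: (zero_order_coef_eq0 ab (m := n.-1) (o := id) (J := k.-1) aI _ _ _ _ (Dp_f0_Lam kn)).
- exact: Cm_q.
- exact: ltn_pred.
- by [].
- by move=> i /q_zero_order[].
- by move=> j jk; apply: nderiv_Dp_f0_a_eq0; lia.
- exact: ln.
- by lia.
Qed.

Lemma Lam_eq0_upper k l : (k <= n)%N -> (l < n)%N -> (k < l)%N -> Lam k l = 0.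
Proof.
move=> kn ln kl.
apply: (zero_order_coef_eq0 ab (m := n.-1) (o := fun i => (n.-1 - i)%N)
  (J := (n.-1 - k)%N) bI _ _ _ _ (Dp_f0_Lam kn)).
- exact: Cm_q.
- by move=> i _; apply: leq_subr.
- by move=> i j; rewrite -n_eq; lia.
- by move=> i /q_zero_order[].
- by move=> j jk; apply: nderiv_Dp_f0_b_eq0; rewrite -n_eq in jk *; lia.
- exact: ln.
- by rewrite -n_eq in ln *; lia.
Qed.

Lemma Lam_subdiag k : (0 < k <= n)%N -> Lam k k.-1 = c_coef k.
Proof.
move=> /[dup] /andP[k0 kn] /nderiv_Dp_f0_a; have k1n : (k.-1 < n)%N by rewrite prednK.
rewrite (eq_on_nderiv _ (Dp_f0_Lam kn) aI) (nderiv_sum ab _ Cm_q (ltn_pred k1n) aI).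
rewrite (big_only1 (Ordinal k1n)) //= => [E | [l ln] /=].
  have [[_ qk] _] := q_zero_order k1n; apply: (mulIf qk).
  by rewrite E /c_coef; field; rewrite qk f0_neq0.
rewrite -val_eqE /= => lk _; have [lk'|lk'|lk'] := ltngtP l k.-1.
- by rewrite Lam_eq0_lower ?mul0r //; lia.
- by have [[ql _] _] := q_zero_order ln; rewrite ql ?mulr0.
- by rewrite lk' eqxx in lk.
Qed.

Lemma Lam_diag k : (k < n)%N -> Lam k k = d_coef k.
Proof.
move=> /[dup] kn /nderiv_Dp_f0_b; have kn' := ltnW kn.
rewrite (eq_on_nderiv _ (Dp_f0_Lam kn') bI) (nderiv_sum ab _ Cm_q (leq_subr k _) bI).
rewrite (big_only1 (Ordinal kn)) //= => [E | [l ln] /=].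
  have [_ [_ qk]] := q_zero_order kn; apply: (mulIf qk).
  by rewrite E /d_coef; field; rewrite qk f0_neq0.
rewrite -val_eqE /= => lk _; have [lk'|lk'|lk'] := ltngtP l k.
- have [_ [ql _]] := q_zero_order ln; rewrite ql ?mulr0 //.
  by rewrite -n_eq in ln kn *; lia.
- by rewrite Lam_eq0_upper ?mul0r.
- by rewrite lk' eqxx in lk.
Qed.

Lemma Lam_relation l : (l < n)%N -> alpha l * Lam l l + alpha l.+1 * Lam l.+1 l = 0.
Proof.
move=> ln; have l1n : (l.+1 < n.+1)%N by [].
transitivity (\sum_(k < n.+1) alpha k * Lam k l).
  rewrite (bigD1 (Ordinal (ltnW l1n))) //= (big_only1 (Ordinal l1n)) //=.
    by rewrite -val_eqE /= eqn_leq ltnn.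
  case=> k kn /=; rewrite -!val_eqE /= => kl1 kl; have [lk|lk|lk] := ltngtP k l.
  - by rewrite Lam_eq0_upper ?mulr0.
  - by rewrite Lam_eq0_lower ?mulr0 //; lia.
  - by rewrite lk eqxx in kl.
apply: (q_free (lam := fun l => \sum_(k < n.+1) alpha k * Lam k l)) => // x xI.
rewrite -[RHS](Dp_f0_relation xI); under eq_bigr => l' _ do rewrite big_distrl /=.
rewrite exchange_big; apply: eq_bigr => k _ /=.
by rewrite (Dp_f0_Lam (ltn_ord k)) // big_distrr; apply: eq_bigr => j _ /=; rewrite mulrA.
Qed.

Lemma alpha_succ k : (k < n)%N -> alpha k.+1 = - alpha k * d_coef k / c_coef k.+1.
Proof.
move=> kn; have := Lam_relation kn; rewrite Lam_diag // Lam_subdiag // => rel.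
have c0 : c_coef k.+1 != 0 by apply: c_coef_neq0.
apply: (mulIf c0); rewrite divfK // mulNr.
by apply/eqP; rewrite -addr_eq0 addrC rel.
Qed.

End Decomposition.

Lemma alpha_formula k : (k <= n)%N -> alpha k =
  (-1) ^+ k * ((\prod_(0 <= i < k) d_coef i) / (\prod_(1 <= i < k.+1) c_coef i)) * alpha 0%N.
Proof.
have [Lam Lam_spec] := in_span_choice (M := n.+1) (w := Dp_f0) Dp_f0_in_span_q.
elim: k => [|k IH] kn; first by rewrite !big_geq // expr0 divr1 !mul1r.
rewrite (alpha_succ Lam_spec kn) IH; last exact: ltnW.
rewrite (big_nat_recr _ _ _ (leq0n k)) (big_nat_recr _ _ _ (ltn0Sn k)).
move: (\prod_(0 <= i < k) d_coef i) (\prod_(1 <= i < k.+1) c_coef i) => P Q.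
by move: (d_coef k) (c_coef k.+1) (alpha 0%N) => d c a0 /=; rewrite exprS invfM; ring.
Qed.

End Coefficients.

Lemma bernstein_expansion x : I x ->
  f0 x = f0 a / p 0%N a * p 0%N x
    + \sum_(1 <= k < n.+1) (-1) ^+ k
        * ((\prod_(0 <= i < k) d_coef i) / (\prod_(1 <= i < k.+1) c_coef i))
        * (f0 a / p 0%N a) * p k x.
Proof.
move=> xI; have [alpha f0_alpha] := U_in_span U_f0.
rewrite (f0_alpha x xI) big_ord_recl (alpha0E f0_alpha) big_add1 big_mkord.
by congr (_ + _); apply: eq_bigr => k _; rewrite (alpha_formula f0_alpha (ltn_ord k))
  (alpha0E f0_alpha).
Qed.

End BernsteinExpansion.

Unset Implicit Arguments.

Theorem theorem4 (R : realType) (rc : bool) (n : nat) (a b : R)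
  (U : (R -> R[i]) -> Prop) (p q : nat -> R -> R[i]) (f0 : R -> R[i]) :
  (0 < n)%N -> a < b ->
  subspaceCm rc a b n U -> has_dim rc a b U n.+1 ->
  bernstein_basis a b n U p ->
  U f0 -> (forall x, in_ab a b x -> 0 < f0 x) ->
  bernstein_basis a b n.-1 (Dspace a b f0 U) q ->
  let c := fun k : nat =>
    nderiv a b k (p k) a / (f0 a * nderiv a b k.-1 (q k.-1) a) in
  let d := fun k : nat =>
    nderiv a b (n - k) (p k) b / (f0 b * nderiv a b (n.-1 - k) (q k) b) in
  forall x, in_ab a b x ->
    f0 x = f0 a / p 0%N a * p 0%N x
         + \sum_(1 <= k < n.+1)
             (-1) ^+ k * ((\prod_(0 <= i < k) d i) / (\prod_(1 <= i < k.+1) c i))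
             * (f0 a / p 0%N a) * p k x.
Proof.
move=> n_gt0 ab U_sub U_dim p_basis U_f0 f0_gt0 q_basis c d x xI.
exact: bernstein_expansion n_gt0 ab U_sub U_dim p_basis U_f0 f0_gt0 q_basis x xI.
Qed.
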